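(* For a measurable space $X$, the following are equivalent: (i) $X$ is sober, i.e. the diagram $X\xrightarrow{\delta}PX\rightrightarrows PPX$ with the two parallel maps $\delta_{PX}$ and $P\delta_X$ is an equalizer diagram in the category of measurable spaces; (ii) the map $x\mapsto\delta_x$ is a bijection between points of $X$ and $\{0,1\}$-valued probability measures on $X$; (iii) the map $X\to\mathrm{Stone}_\sigma(\Sigma(X))$, $x\mapsto(E\mapsto \top\text{ if }x\in E,\ \bot\text{ otherwise})$, is an isomorphism of measurable spaces.
   Context: For a measurable space $X$ with $\sigma$-algebra $\Sigma(X)$, $PX$ is the set of probability measures on $X$ with the smallest $\sigma$-algebra making $p\mapsto p(B)$ measurable for all $B\in\Sigma(X)$; for measurable $f$, $Pf$ is pushforward of measures; $\delta\colon X\to PX$ sends $x$ to the Dirac measure $\delta_x$. For a Boolean $\sigma$-algebra $A$ (a Boolean algebra with countable suprema and infima), $\mathrm{Stone}_\sigma(A)$ is the set of Boolean homomorphisms $A\to\{\bot,\top\}$ preserving countable suprema, equipped with the $\sigma$-algebra consisting of the sets $[a]=\{\phi:\phi(a)=\top\}$, $a\in A$. *)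

From HB Require Import structures.
From mathcomp Require Import all_boot all_order all_algebra.
From mathcomp Require Import all_classical all_reals all_analysis.
Set Implicit Arguments.
Unset Strict Implicit.
Unset Printing Implicit Defensive.
Import Order.TTheory GRing.Theory Num.Theory.
Local Open Scope classical_set_scope.
Local Open Scope ereal_scope.

(* Equality of measures: agreement on all measurable sets (library measures
   are set functions on all subsets, so this is the correct notion of
   equality of points of PX / PPX). *)
Definition meas_eq (R : realType) d (T : measurableType d)
  (m1 m2 : set T -> \bar R) : Prop :=
  forall A, measurable A -> m1 A = m2 A.

Section giry_P.
Context (R : realType) d (X : measurableType d).

(* PX = pprobability X R : probability measures on X with the sigma-algebra
   generated by the evaluation maps p |-> p(B).  delta : X -> PX. *)
Definition diracP (x : X) : pprobability X R := (\d_x : probability X R)%R.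

(* (i) X is sober: X --delta--> PX ==> PPX (delta_PX and P delta_X) is an
   equalizer diagram in the category of measurable spaces.
   delta_PX p = \d_p and (P delta_X) p = pushforward of p along delta_X;
   maps into PPX are compared pointwise as measures. *)
Definition sober : Prop :=
  measurable_fun [set: X] diracP /\
  (forall x : X, meas_eq (@dirac _ (pprobability X R) (diracP x) R)
                          (pushforward (diracP x) diracP)) /\
  (forall (d' : measure_display) (Z : measurableType d')
          (f : Z -> pprobability X R),
     measurable_fun [set: Z] f ->
     (forall z : Z, meas_eq (@dirac _ (pprobability X R) (f z) R)
                             (pushforward (f z) diracP)) ->
     exists! g : Z -> X,
       measurable_fun [set: Z] g /\ (forall z, meas_eq (diracP (g z)) (f z))).

Definition zero_one_valued (p : probability X R) : Prop :=
  forall B, measurable B -> p B = 0 \/ p B = 1.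

Definition dirac_bij : Prop :=
  (forall x y : X, meas_eq (diracP x) (diracP y) -> x = y) /\
  (forall p : probability X R, zero_one_valued p ->
     exists x : X, meas_eq (diracP x) p).

End giry_P.

Section stone.
Context d (X : measurableType d).

(* Boolean sigma-homomorphisms Sigma(X) -> {false, true}; encoded as
   functions on all subsets of X that vanish on non-measurable sets. *)
Definition sigma_hom (phi : set X -> bool) : Prop :=
  (forall A, ~ measurable A -> phi A = false) /\
  phi setT = true /\ phi set0 = false /\
  (forall A, measurable A -> phi (~` A) = ~~ phi A) /\
  (forall A B, measurable A -> measurable B -> phi (A `&` B) = phi A && phi B) /\
  (forall A B, measurable A -> measurable B -> phi (A `|` B) = phi A || phi B) /\
  (forall F : (set X)^nat, (forall n, measurable (F n)) ->
     (phi (\bigcup_n F n) <-> exists n, phi (F n))).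

Definition eta_fun (x : X) : set X -> bool :=
  fun E => `[< measurable E /\ E x >].

Lemma eta_fun_hom x : sigma_hom (eta_fun x).
Proof.
rewrite /eta_fun; split; [|split; [|split; [|split; [|split; [|split]]]]].
- by move=> A nA; apply/asboolP => -[].
- by apply/asboolP.
- by apply/asboolP => -[].
- move=> A mA; apply/asboolP/negP.
  + by case=> _ nAx /asboolP [].
  + by move=> h; split; [exact: measurableC| move=> Ax; apply: h; apply/asboolP].
- move=> A B mA mB; apply/asboolP/andP.
  + by case=> _ [Ax Bx]; split; apply/asboolP.
  + by case=> /asboolP [_ Ax] /asboolP [_ Bx]; split; [exact: measurableI|].
- move=> A B mA mB; apply/asboolP/orP.
  + by case=> _ [Ax|Bx]; [left|right]; apply/asboolP.
  + by split; [exact: measurableU|]; case: H => /asboolP [_ ?]; [left|right].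
- move=> F mF; split.
  + by move=> /asboolP [_ [n _ Fnx]]; exists n; apply/asboolP.
  + move=> [n /asboolP [_ Fnx]]; apply/asboolP; split.
      exact: bigcupT_measurable.
    by exists n.
Qed.

Definition stone : Type := {phi : set X -> bool | sigma_hom phi}.

Definition eta (x : X) : stone := exist _ (eta_fun x) (eta_fun_hom x).

HB.instance Definition _ := gen_eqMixin stone.
HB.instance Definition _ := gen_choiceMixin stone.
HB.instance Definition _ := isPointed.Build stone (eta point).

Definition stone_set (a : set X) : set stone := [set phi : stone | sval phi a].

Definition stone_measurable : set (set stone) :=
  [set S | exists a, measurable a /\ S = stone_set a].

Lemma stone_measurable0 : stone_measurable set0.
Proof.
exists set0; split => //; apply/seteqP; split => // phi.
rewrite /stone_set /=.
move: phi => [phi hphi]; case: (hphi) => [hh1 [hh2 [h0 hh_]]] /=.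
by rewrite h0.
Qed.

Lemma stone_measurableC A : stone_measurable A -> stone_measurable (~` A).
Proof.
move=> [a [ma ->]]; exists (~` a); split; first exact: measurableC.
apply/seteqP; split => phi; move: phi => [phi hphi]; case: (hphi) => [hh3 [hh4 [hh5 [hC hh_]]]];
  rewrite /stone_set /= hC //.
  by move/negP.
by move/negP.
Qed.

Lemma stone_measurable_bigcup (F : (set stone)^nat) :
  (forall i, stone_measurable (F i)) -> stone_measurable (\bigcup_i F i).
Proof.
move=> mF; have [a ha] := choice mF.
have ma : forall n, measurable (a n) by move=> n; case: (ha n).
exists (\bigcup_i a i); split; first exact: bigcupT_measurable.
apply/seteqP; split.
- move=> phi [i _]; rewrite (proj2 (ha i)) /stone_set /=.
  move: phi => [phi hphi]; case: (hphi) => [hh6 [hh7 [hh8 [hh9 [hh10 [hh11 hU]]]]]] /= phii.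
  by apply/hU => //; exists i.
- move=> phi; move: phi => [phi hphi]; case: (hphi) => [hh12 [hh13 [hh14 [hh15 [hh16 [hh17 hU]]]]]].
  rewrite /stone_set /=.
  move/hU => -[//|i ai].
  by exists i => //; rewrite (proj2 (ha i)).
Qed.

Definition stone_display : measure_display.
Proof. by constructor. Qed.

HB.instance Definition _ :=
  @isMeasurable.Build stone_display stone stone_measurable
    stone_measurable0 stone_measurableC stone_measurable_bigcup.

Definition stone_iso : Prop :=
  exists g : stone -> X,
    [/\ measurable_fun [set: X] eta, measurable_fun [set: stone] g,
        cancel eta g & cancel g eta].

End stone.

From Pilot Require Import Defs.
From HB Require Import structures.
From mathcomp Require Import all_boot all_order all_algebra.
From mathcomp Require Import all_classical all_reals all_analysis.

(* The {0,1}-valued probabilities on X are exactly the sigma-homomorphisms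
   Sigma(X) -> {0,1}: p corresponds to its sigma-filter of p-full measurable
   sets, and delta_x to eta x; this gives (ii) <-> (iii).  For (i), the
   sigma-algebra of PX is generated by the sets {q | q U < r}, whose preimages
   under delta are empty or ~` U, so for {0,1}-valued p a measurable S of PX
   has a measurable, p-full preimage exactly when p lies in S; hence the
   equalizer condition delta_PX p = (P delta) p singles out the {0,1}-valued
   p.  A cone into the equalizer is thus a measurable family of {0,1}-valued
   measures, which the bijection of (ii) lifts to X; conversely uniqueness of
   the lift of a constant family yields preimages under delta, and uniqueness
   of the lift of delta itself separates points. *)

Set Implicit Arguments.
Unset Strict Implicit.
Unset Printing Implicit Defensive.
Import Order.TTheory GRing.Theory Num.Theory.
Local Open Scope classical_set_scope.
Local Open Scope ereal_scope.

Lemma ereal0_neq1 (R : realType) : (0 : \bar R) <> 1.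
Proof. by move/esym/eqP; rewrite onee_eq0. Qed.

Lemma probability_eq1 (R : realType) d (X : measurableType d)
    (p : probability X R) (A : set X) :
  measurable A -> p A = 1 <-> ~ p A < 1.
Proof.
move=> mA; split => [->|/negP]; first by rewrite ltxx.
by rewrite -leNgt => p1; apply/eqP; rewrite eq_le p1 probability_le1.
Qed.

Section zero_one_valued.
Context (R : realType) d (X : measurableType d) (p : probability X R).
Hypothesis p01 : zero_one_valued p.

Lemma zero_one_setC A : measurable A -> p (~` A) = 1 <-> p A <> 1.
Proof.
move=> mA; rewrite probability_setC //.
case: (p01 mA) => ->; rewrite ?sube0 ?subee //.
  by split=> // _; exact: ereal0_neq1.
by split=> [/ereal0_neq1|].
Qed.

Lemma zero_one_bigcup (F : (set X)^nat) : (forall n, measurable (F n)) ->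
  p (\bigcup_n F n) = 1 <-> exists n, p (F n) = 1.
Proof.
move=> mF; have mU := bigcupT_measurable _ mF; split; last first.
  move=> [n pFn]; apply/eqP; rewrite eq_le probability_le1 //= -pFn.
  by apply: le_measure; rewrite ?inE //; exact: bigcup_sup.
move=> pU; apply: contrapT => /forallNP pF.
have F0 n : p (F n) = 0 by case: (p01 (mF n)) => // /pF.
suff : p (\bigcup_n F n) = 0 by rewrite pU => /esym/ereal0_neq1.
have := measure_sigma_subadditive p mF mU (@subset_refl _ _).
rewrite eseries0 => [pU0|]; last by move=> n _ _; exact: F0.
by apply/eqP; rewrite eq_le pU0 measure_ge0.
Qed.

Lemma zero_one_setU A B : measurable A -> measurable B ->
  p (A `|` B) = 1 <-> p A = 1 \/ p B = 1.
Proof.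
move=> mA mB; rewrite -bigcup2E zero_one_bigcup; last first.
  by case=> [|[|n]] //=.
split=> [[[|[|n]]]|[]] /=; [left|right| |exists 0%N|exists 1%N] => //.
by rewrite measure0 => /ereal0_neq1.
Qed.

Lemma zero_one_setI A B : measurable A -> measurable B ->
  p (A `&` B) = 1 <-> p A = 1 /\ p B = 1.
Proof.
move=> mA mB; rewrite -[A `&` B]setCK setCI.
rewrite zero_one_setC; last by apply: measurableU; exact: measurableC.
rewrite zero_one_setU ?zero_one_setC //; try exact: measurableC.
by split=> [/not_orP [] /contrapT ? /contrapT ?|[? ?] []].
Qed.

End zero_one_valued.

Section diracP.
Context (R : realType) d (X : measurableType d).
Local Notation delta := (@diracP R d X).

Lemma diracPE x A : delta x A = (x \in A)%:R%:E.
Proof. by rewrite /diracP /= diracE. Qed.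

Lemma diracP_eq1 x A : delta x A = 1 <-> A x.
Proof.
rewrite diracPE; case: (boolP (x \in A)); rewrite ?(in_setE, notin_setE) //.
by move=> nAx; split=> [/ereal0_neq1|/nAx].
Qed.

Lemma meas_eq_diracP x y :
  meas_eq (delta x) (delta y) <-> forall A, measurable A -> (A x <-> A y).
Proof.
split=> xy A mA; first by rewrite -!diracP_eq1 xy.
rewrite !diracPE; congr ((nat_of_bool _)%:R%:E).
by apply/idP/idP; rewrite !in_setE => /(xy A mA).
Qed.

Lemma diracP_zero_one x : zero_one_valued (delta x : probability X R).
Proof. by move=> A _; rewrite diracPE; case: (x \in A); [right|left]. Qed.

Lemma preimage_diracP_mset (U : set X) (r : R) : (r <= 1)%R ->
  delta @^-1` mset U r = if (0 < r)%R then ~` U else set0.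
Proof.
move=> r1; apply/seteqP; split => x; rewrite /mset /= diracPE lte_fin;
  case: ifPn => r0; case: (boolP (x \in U)); rewrite ?(in_setE, notin_setE) //=.
1,2: by rewrite ltNge r1.
by move=> _; exact/negP.
Qed.

Lemma preimage_diracP (p : probability X R) : zero_one_valued p ->
  forall A : set (pprobability X R), measurable A ->
  measurable (delta @^-1` A) /\ (p (delta @^-1` A) = 1 <-> A p).
Proof.
move=> p01; apply: smallest_sub; first split.
- rewrite preimage_set0 measure0; split=> //; split=> // /ereal0_neq1 [].
- move=> A [mA pA]; rewrite setTD preimage_setC; split; first exact: measurableC.
  by rewrite zero_one_setC // pA.
- move=> F mF; rewrite preimage_bigcup.
  have mdF n : measurable (delta @^-1` F n) by case: (mF n).
  split; first exact: bigcupT_measurable.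
  rewrite zero_one_bigcup //.
  by split=> [[n /(proj2 (mF n)) Fn]|[n _ /(proj2 (mF n)) Fn]]; exists n.
move=> _ [r r01 [U mU <-]]; move: r01; rewrite /= in_itv /= => /andP[r0 r1].
rewrite preimage_diracP_mset // /mset /=; case: ifPn => r0'.
- split; first exact: measurableC.
  rewrite zero_one_setC //; case: (p01 _ mU) => ->; rewrite lte_fin.
  + by rewrite r0'; split=> // _ /ereal0_neq1.
  + by rewrite ltNge r1; split.
- rewrite measure0; split=> //; split=> [/ereal0_neq1 //|].
  have -> : r = 0%R by apply/eqP; rewrite eq_le r0 andbT leNgt.
  by rewrite ltNge measure_ge0.
Qed.

Lemma measurable_diracP : measurable_fun [set: X] delta.
Proof.
move=> _ A mA; rewrite setTI.
exact: (proj1 (preimage_diracP (diracP_zero_one point) mA)).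
Qed.

Lemma measurable_mset1 (A : set X) : measurable A ->
  measurable (mset A 1 : set (pprobability X R)).
Proof.
move=> mA; apply: sub_gen_smallest; exists 1%R; last by exists A.
by rewrite /= in_itv /= ler01 lexx.
Qed.

Lemma dirac_pushforward_diracP (p : pprobability X R) :
  meas_eq (@dirac _ (pprobability X R) p R) (pushforward p delta) <-> zero_one_valued p.
Proof.
split=> [dpE A mA|p01 A mA].
  have := dpE _ (measurable_mset1 mA).
  rewrite /pushforward preimage_diracP_mset // ltr01 diracE.
  have -> : p A = 1 - p (~` A) by rewrite -probability_setC ?setCK //; exact: measurableC.
  by move=> <-; case: (_ \in _); [left; rewrite subee|right; rewrite sube0].
have [mdA pdA] := preimage_diracP p01 mA.
rewrite /pushforward diracE; move: pdA; case: (p01 _ mdA) => ->;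
  case: (boolP (p \in A)); rewrite ?(in_setE, notin_setE) // => Ap.
- by move=> [_ /(_ Ap) /ereal0_neq1].
- by move=> [/(_ erefl) /Ap].
Qed.

End diracP.

Section sober.
Context (R : realType) d (X : measurableType d).
Local Notation delta := (@diracP R d X).

Lemma dirac_bij_sober : dirac_bij R X -> sober R X.
Proof.
move=> [delta_inj delta_surj]; split; first exact: measurable_diracP.
split=> [x|d' Z f mf fE]; first exact/dirac_pushforward_diracP/diracP_zero_one.
have f01 z : zero_one_valued (f z) := proj1 (dirac_pushforward_diracP (f z)) (fE z).
have [g gE] := choice (fun z => delta_surj _ (f01 z)).
exists g; split; [split=> //|]; last first.
  by move=> g' [_ g'E]; apply/funext => z; apply: delta_inj => A mA; rewrite gE // g'E.
move=> _ B mB; rewrite setTI.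
have gB z : B (g z) <-> ~ f z B < 1.
  by rewrite -(@diracP_eq1 R) gE // probability_eq1.
have -> : g @^-1` B = [set: Z] `&` f @^-1` (~` mset B 1).
  by apply/seteqP; split=> z /= => [/gB|[_ /gB]].
apply: (mf measurableT); apply: measurableC; exact: (measurable_mset1 (R:=R) mB).
Qed.

Lemma sober_dirac_bij : sober R X -> dirac_bij R X.
Proof.
move=> [mdelta [dpE delta_univ]]; split=> [x y dxy|p p01].
  have sep := proj1 (meas_eq_diracP R x y) dxy.
  (* id and the transposition of the inseparable x, y both lift delta. *)
  pose sw z := if z == x then y else if z == y then x else z.
  have swA z A : measurable A -> A (sw z) <-> A z.
    move=> mA; rewrite /sw; case: eqVneq => [->|_]; first by rewrite sep.
    by case: eqVneq => [->|_] //; rewrite sep.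
  have msw : measurable_fun [set: X] sw.
    move=> _ B mB; rewrite setTI (_ : _ @^-1` _ = B) //.
    by apply/seteqP; split=> z /(swA z B mB).
  have swE z : meas_eq (delta (sw z)) (delta z) by apply/meas_eq_diracP; exact: swA.
  have [g [_ g_uniq]] := delta_univ _ X delta mdelta dpE.
  have gid := g_uniq id (conj (@measurable_id _ X setT) (fun z A mA => erefl)).
  have gsw := g_uniq sw (conj msw swE).
  by have := congr1 (fun h => h x) (etrans (esym gid) gsw); rewrite /sw eqxx.
have [g [[_ gE] _]] := delta_univ _ X (fun=> p : pprobability X R) (measurable_cst _)
  (fun=> proj2 (dirac_pushforward_diracP p) p01).
by exists (g point); exact: gE.
Qed.

End sober.

Section prob_of_sigma_hom.
Context (R : realType) d (X : measurableType d) (phi : set X -> bool).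
Hypothesis phi_hom : sigma_hom phi.

Definition sigma_hom_measure (A : set X) : \bar R := (phi A)%:R%:E.

Lemma sigma_hom_measure0 : sigma_hom_measure set0 = 0.
Proof. by rewrite /sigma_hom_measure (proj1 (proj2 (proj2 phi_hom))). Qed.

Lemma sigma_hom_measure_ge0 A : 0 <= sigma_hom_measure A.
Proof. by rewrite /sigma_hom_measure lee_fin; case: (phi A). Qed.

Lemma sigma_hom_measureT : sigma_hom_measure setT = 1.
Proof. by rewrite /sigma_hom_measure (proj1 (proj2 phi_hom)). Qed.

Lemma sigma_hom_measure_sigma_additive : semi_sigma_additive sigma_hom_measure.
Proof.
move=> F mF tF mU; have [_ [_ [phi0 [_ [phiI [_ phiU]]]]]] := phi_hom.
rewrite /sigma_hom_measure; case: (boolP (phi (\bigcup_n F n))) => [phiFU|NphiFU].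
  have [n0 phiFn0] := proj1 (phiU F mF) phiFU.
  have phiF i : i != n0 -> phi (F i) = false.
    move=> in0; apply/negbTE/negP => phiFi.
    have : phi (F i `&` F n0) by rewrite phiI // phiFi phiFn0.
    suff -> : F i `&` F n0 = set0 by rewrite phi0.
    apply/seteqP; split=> // x [Fix Fn0x]; apply/negP: in0; rewrite negbK.
    by apply/eqP/tF => //; exists x.
  apply: cvg_near_cst; exists n0.+1 => // n /= n0n.
  rewrite big_mkord (bigD1 (Ordinal n0n)) //= phiFn0 big1 ?adde0 // => i.
  by rewrite -val_eqE /= => /phiF ->.
have phiF i : phi (F i) = false.
  by apply/negbTE/negP => phiFi; move/negP: NphiFU; apply; apply/(phiU F mF); exists i.
by apply: cvg_near_cst; exists 0%N => // n _; rewrite big1 // => i _; rewrite phiF.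
Qed.

HB.instance Definition _ := isMeasure.Build _ X R sigma_hom_measure
  sigma_hom_measure0 sigma_hom_measure_ge0 sigma_hom_measure_sigma_additive.
HB.instance Definition _ :=
  Measure_isProbability.Build _ X R sigma_hom_measure sigma_hom_measureT.

Definition prob_of_sigma_hom : probability X R := sigma_hom_measure.

Lemma prob_of_sigma_hom_zero_one : zero_one_valued prob_of_sigma_hom.
Proof. by move=> A _; rewrite /= /sigma_hom_measure; case: (phi A); [right|left]. Qed.

End prob_of_sigma_hom.

Section sigma_hom_of_prob.
Context (R : realType) d (X : measurableType d).

Definition sigma_hom_of_prob (p : probability X R) : set X -> bool :=
  fun A => `[< measurable A /\ p A = 1 >].

Lemma sigma_hom_of_probE p A : measurable A -> sigma_hom_of_prob p A = `[< p A = 1 >].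
Proof. by move=> mA; apply: asbool_equiv_eq; split=> [[]|]. Qed.

Lemma sigma_hom_of_prob_hom p : zero_one_valued p -> sigma_hom (sigma_hom_of_prob p).
Proof.
move=> p01; split; [|split; [|split; [|split; [|split; [|split]]]]].
- by move=> A nA; apply: asboolF => -[].
- by rewrite sigma_hom_of_probE // probability_setT; exact/asboolP.
- by rewrite sigma_hom_of_probE // measure0; apply: asboolF; exact: ereal0_neq1.
- move=> A mA; rewrite !sigma_hom_of_probE //; last exact: measurableC.
  by rewrite -asbool_neg; apply: asbool_equiv_eq; exact: zero_one_setC.
- move=> A B mA mB; rewrite !sigma_hom_of_probE //; last exact: measurableI.
  by rewrite -asbool_and; apply: asbool_equiv_eq; exact: zero_one_setI.
- move=> A B mA mB; rewrite !sigma_hom_of_probE //; last exact: measurableU.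
  by rewrite -asbool_or; apply: asbool_equiv_eq; exact: zero_one_setU.
- move=> F mF; rewrite sigma_hom_of_probE; last exact: bigcupT_measurable.
  rewrite asboolE zero_one_bigcup //.
  by split=> -[n Fn]; exists n; move: Fn; rewrite sigma_hom_of_probE // asboolE.
Qed.

Lemma sigma_hom_of_diracP x : sigma_hom_of_prob (diracP R x) = eta_fun x.
Proof. by apply/funext => A; apply: asbool_equiv_eq; rewrite diracP_eq1. Qed.

Lemma sigma_hom_of_prob_eq p q : zero_one_valued p -> zero_one_valued q ->
  sigma_hom_of_prob p = sigma_hom_of_prob q <-> meas_eq p q.
Proof.
move=> p01 q01; split=> [pq A mA|pq]; last first.
  by apply/funext => A; apply: asbool_equiv_eq; split=> -[mA]; rewrite pq.
have [pAq qAp] := asbool_eq_equiv (congr1 (fun phi => phi A) pq).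
case: (p01 _ mA) => pA; case: (q01 _ mA) => qA; rewrite pA qA //.
- by have [_] := qAp (conj mA qA); rewrite pA.
- by have [_] := pAq (conj mA pA); rewrite qA.
Qed.

Lemma sigma_hom_of_probK phi (phi_hom : sigma_hom phi) :
  sigma_hom_of_prob (prob_of_sigma_hom R phi_hom) = phi.
Proof.
apply/funext => A; rewrite /sigma_hom_of_prob /= /sigma_hom_measure.
have [mA|nA] := pselect (measurable A); last first.
  by rewrite (proj1 phi_hom A nA); apply: asboolF => -[].
by case: (phi A); [apply/asboolP|apply: asboolF => -[_ /ereal0_neq1]].
Qed.

End sigma_hom_of_prob.

Section stone.
Context (R : realType) d (X : measurableType d).
Local Notation eta := (@Defs.eta d X).

Lemma eta_eq_sval (x : X) (phi : stone X) : eta x = phi <-> eta_fun x = sval phi.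
Proof. by case: phi => phi phi_hom; split=> [<-//|xphi]; exact: eq_exist. Qed.

Lemma eta_eq_diracP (x y : X) :
  eta x = eta y <-> meas_eq (diracP R x) (diracP R y).
Proof.
rewrite eta_eq_sval /= -!(sigma_hom_of_diracP R).
exact: (sigma_hom_of_prob_eq (diracP_zero_one _ _) (diracP_zero_one _ _)).
Qed.

Lemma preimage_eta_stone_set (A : set X) : measurable A ->
  eta @^-1` stone_set A = A.
Proof.
move=> mA; apply/seteqP; split=> x; rewrite /stone_set /= /eta_fun.
  by case/asboolP.
by move=> Ax; apply/asboolP.
Qed.

Lemma measurable_eta : measurable_fun [set: X] eta.
Proof. by move=> _ _ [A [mA ->]]; rewrite setTI preimage_eta_stone_set. Qed.

Lemma measurable_eta_inverse (g : stone X -> X) :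
  cancel g eta -> measurable_fun [set: stone X] g.
Proof.
move=> etaV _ A mA; rewrite setTI; exists A; split=> //.
apply/seteqP; split=> phi; rewrite /stone_set /= -[in sval phi](etaV phi) /= /eta_fun.
  by move=> gA; apply/asboolP.
by case/asboolP.
Qed.

Lemma stone_iso_dirac_bij : stone_iso X -> dirac_bij R X.
Proof.
move=> [g [_ _ etaK etaV]]; split=> [x y xy|p p01].
  by rewrite -(etaK x) -(etaK y); congr g; exact/eta_eq_diracP.
pose phi : stone X := exist _ _ (sigma_hom_of_prob_hom p01).
exists (g phi); apply/(sigma_hom_of_prob_eq (diracP_zero_one R (g phi)) p01).
by rewrite sigma_hom_of_diracP; exact/(eta_eq_sval (g phi) phi)/etaV.
Qed.

Lemma dirac_bij_stone_iso : dirac_bij R X -> stone_iso X.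
Proof.
move=> [delta_inj delta_surj].
have eta_surj (phi : stone X) : exists x, eta x = phi.
  case: phi => phi phi_hom.
  have [x xphi] := delta_surj _ (prob_of_sigma_hom_zero_one R phi_hom).
  exists x; apply/eta_eq_sval => /=.
  rewrite -(sigma_hom_of_diracP R) -(sigma_hom_of_probK R phi_hom).
  exact/sigma_hom_of_prob_eq/xphi/prob_of_sigma_hom_zero_one/diracP_zero_one.
have [g etaV] := choice eta_surj.
exists g; split; [exact: measurable_eta|exact: measurable_eta_inverse| |exact: etaV].
by move=> x; apply/delta_inj/eta_eq_diracP; rewrite etaV.
Qed.

End stone.

Theorem lemma2p14 (R : realType) (d : measure_display) (X : measurableType d) :
  (sober R X <-> dirac_bij R X) /\ (dirac_bij R X <-> stone_iso X).
Proof.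
split; split.
- exact: sober_dirac_bij.
- exact: dirac_bij_sober.
- exact: dirac_bij_stone_iso.
- exact: stone_iso_dirac_bij.
Qed.
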